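(* Let $N$ be a positive integer. If there is at least one pair of palindromic numbers $A,B$ with $N=A/B$, then there are infinitely many such pairs.
   Context: A positive integer $n$ is palindromic if its binary representation (most significant digit first, no leading zeros) reads the same forwards and backwards. *)

From mathcomp Require Import all_boot.
Set Implicit Arguments.
Unset Strict Implicit.
Unset Printing Implicit Defensive.

(* Binary digits of n, least significant first, no leading zeros
   (bits 0 = [::]). Defined by well-founded-free recursion with fuel n. *)
Fixpoint bits_aux (fuel n : nat) : seq bool :=
  match fuel with
  | 0 => [::]
  | fuel'.+1 => if n == 0 then [::] else odd n :: bits_aux fuel' n./2
  end.

Definition bits (n : nat) : seq bool := bits_aux n n.

Definition palindromic (n : nat) : Prop := 0 < n /\ rev (bits n) = bits n.

Example bits_test : [:: bits 6; bits 5; bits 1; bits 0] =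
  [:: [:: false; true; true]; [:: true; false; true]; [:: true]; [::]].
Proof. by []. Qed.

(* If A = N B with A and B binary palindromes, then so is A (2^m + 1) = N (B (2^m + 1))
   for every m at least as long as A and B: multiplying a number x by 2^m + 1 writes
   x, then zeros up to position m, then x again, and this word is a palindrome
   whenever the binary word of x is. Letting m grow gives arbitrarily large pairs. *)
From mathcomp Require Import all_boot zify.

Lemma bits_aux_fuel f g n : n <= f -> n <= g -> bits_aux f n = bits_aux g n.
Proof.
elim: f g n => [|f IH] [|g] [|n] //= nf ng.
by congr (_ :: _); apply: IH; have := odd_double_half n.+1; lia.
Qed.

Lemma bitsE n : 0 < n -> bits n = odd n :: bits n./2.
Proof.
case: n => // n _; rewrite {1}/bits /=.
by congr (_ :: _); apply: bits_aux_fuel => //; have := odd_double_half n.+1; lia.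
Qed.

Fixpoint nat_of_bits (s : bitseq) : nat :=
  if s is b :: t then b + (nat_of_bits t).*2 else 0.

Lemma nat_of_bits_cat s t :
  nat_of_bits (s ++ t) = nat_of_bits s + 2 ^ size s * nat_of_bits t.
Proof. by elim: s => [|b s IH] /=; rewrite ?mul1n // IH expnS; lia. Qed.

Lemma nat_of_bits_nseq0 n : nat_of_bits (nseq n false) = 0.
Proof. by elim: n => //= n ->. Qed.

Lemma bitsK : cancel bits nat_of_bits.
Proof.
elim/ltn_ind=> n IH; case: (posnP n) => [-> // | n_gt0].
rewrite bitsE //= IH ?odd_double_half //.
by have := odd_double_half n; lia.
Qed.

(* [last true] encodes "no leading zero", the empty word included. *)
Lemma last_bits n : last true (bits n).
Proof.
elim/ltn_ind: n => n IH; case: (posnP n) => [-> // | n_gt0].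
rewrite bitsE //=; case: (posnP n./2) => [half0 | half_gt0].
  by have := odd_double_half n; rewrite half0; case: (odd n) => //=; lia.
have half_lt : n./2 < n by have := odd_double_half n; lia.
by have := IH _ half_lt; rewrite (bitsE _ half_gt0).
Qed.

Lemma nat_of_bitsK s : last true s -> bits (nat_of_bits s) = s.
Proof.
elim: s => // b t IH /= last_bt.
have last_t : last true t by case: t last_bt {IH}.
case: (posnP (b + (nat_of_bits t).*2)) => [val0 | val_gt0].
  have [b0 t0] : b = false /\ nat_of_bits t = 0 by move: val0; case: (b); lia.
  by move: (IH last_t) last_bt; rewrite t0 b0 => <-.
rewrite bitsE // oddD odd_double addbF oddb -{2}(IH last_t); congr (_ :: _).
by case: (b); rewrite /= ?uphalf_double ?half_double.
Qed.

Lemma bits_mul_pow2S n m : 0 < n -> size (bits n) <= m ->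
  bits (n * (2 ^ m + 1)) = bits n ++ nseq (m - size (bits n)) false ++ bits n.
Proof.
move=> n_gt0 size_le.
rewrite -[RHS]nat_of_bitsK; last by have := last_bits n; rewrite !last_cat (bitsE _ n_gt0).
congr bits; rewrite !nat_of_bits_cat nat_of_bits_nseq0 bitsK size_nseq.
by rewrite mulnA -expnD subnKC //; lia.
Qed.

Lemma palindromic_mul_pow2S n m : palindromic n -> size (bits n) <= m ->
  palindromic (n * (2 ^ m + 1)).
Proof.
move=> [n_gt0 rev_n] size_le; split; first by rewrite muln_gt0 n_gt0 addn1.
by rewrite bits_mul_pow2S // !rev_cat rev_n rev_nseq catA.
Qed.

Theorem theorem11 (N : nat) :
  0 < N ->
  (exists A B : nat, palindromic A /\ palindromic B /\ A = N * B) ->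
  forall k : nat, exists A B : nat,
    k < A /\ palindromic A /\ palindromic B /\ A = N * B.
Proof.
move=> _ [A [B [palA [palB eqA]]]] k.
set m := size (bits A) + size (bits B) + k.
have k_lt : k < 2 ^ m by apply: leq_ltn_trans (ltn_expl m (ltnSn 1)); lia.
exists (A * (2 ^ m + 1)), (B * (2 ^ m + 1)); split; [|split; [|split]].
- by case: palA => A_gt0 _; nia.
- by apply: palindromic_mul_pow2S; rewrite // /m; lia.
- by apply: palindromic_mul_pow2S; rewrite // /m; lia.
- by rewrite eqA mulnA.
Qed.
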